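(* Fix $\tau\in\mathbb N$, $d\in(1,2]$, $m\in[1,\infty)$. Let $S=\{x_0,x_1,\dots,x_\tau\}$ (distinct points) with the metric $\rho(x,y)=1$ if $x\ne y$ and $x_0\in\{x,y\}$, $\rho(x,y)=d$ for distinct $x,y\in\{x_1,\dots,x_\tau\}$, and the measure $\mu(\{x_0\})=1$, $\mu(\{x_i\})=m$ for $i\in\{1,\dots,\tau\}$; let $\mathfrak S=(S,\rho,\mu)$. Then, with implicit constants independent of $\tau,d,m,\kappa$ (depending at most on $p$), $$\mathfrak c_{\mathfrak S}(\kappa,p)\simeq\mathfrak c^{\rm c}_{\mathfrak S}(\kappa,p)\simeq\begin{cases}\max\{1,\tau^{1/p}m^{1/p-1}\}& \kappa\in[1,d),\ p\in[1,\infty),\\ 1&\kappa\in[d,\infty)\text{ or }p=\infty.\end{cases}$$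
   Context: For $\kappa\ge1$: $\mathcal M^{\rm c}_{\kappa}f(x)=\sup_{s>0}\mu(B(x,\kappa s))^{-1}\int_{B(x,s)}|f|d\mu$ and $\mathcal M_\kappa f(x)=\sup\{\mu(B(y,\kappa s))^{-1}\int_{B(y,s)}|f|d\mu: y\in X, s>0, x\in B(y,s)\}$, where $B(y,s)$ are open balls. $\mathfrak c^{\rm c}_{\mathfrak X}(\kappa,p)$ (respectively $\mathfrak c_{\mathfrak X}(\kappa,p)$) is the best constant $C$ in $\sup_{\lambda>0}\lambda\mu(\{|Tf|>\lambda\})^{1/p}\le C\|f\|_p$ for $T=\mathcal M^{\rm c}_\kappa$ (respectively $T=\mathcal M_\kappa$), $p<\infty$, and the $L^\infty$ operator norm for $p=\infty$. *)

From HB Require Import structures.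
From mathcomp Require Import all_boot all_order all_algebra.
From mathcomp Require Import boolp classical_sets reals ereal exp.
Set Implicit Arguments. Unset Strict Implicit. Unset Printing Implicit Defensive.
Import Order.TTheory GRing.Theory Num.Theory.
Local Open Scope classical_set_scope.
Local Open Scope ring_scope.

(* The space S = {x_0, ..., x_tau} is 'I_tau.+1, with x_0 = ord0. *)

Definition rhoS (R : realType) (tau : nat) (d : R) (x y : 'I_tau.+1) : R :=
  if x == y then 0 else if (x == ord0) || (y == ord0) then 1 else d.

Definition wtS (R : realType) (tau : nat) (m : R) (x : 'I_tau.+1) : R :=
  if x == ord0 then 1 else m.

Definition muS (R : realType) (tau : nat) (m : R) (A : pred 'I_tau.+1) : R :=
  \sum_(x : 'I_tau.+1 | A x) wtS m x.

Definition ballS (R : realType) (tau : nat) (d : R) (y : 'I_tau.+1) (s : R)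
  : pred 'I_tau.+1 := [pred x | rhoS d y x < s].

Definition intBallS (R : realType) (tau : nat) (d m : R)
  (f : 'I_tau.+1 -> R) (y : 'I_tau.+1) (s : R) : R :=
  \sum_(x : 'I_tau.+1 | rhoS d y x < s) `|f x| * wtS m x.

Definition McS (R : realType) (tau : nat) (d m kappa : R)
  (f : 'I_tau.+1 -> R) (x : 'I_tau.+1) : R :=
  sup ((fun s => (muS m (ballS d x (kappa * s)))^-1 * intBallS d m f x s)
         @` [set s : R | 0 < s]).

Definition MuS (R : realType) (tau : nat) (d m kappa : R)
  (f : 'I_tau.+1 -> R) (x : 'I_tau.+1) : R :=
  sup ((fun ys : 'I_tau.+1 * R =>
          (muS m (ballS d ys.1 (kappa * ys.2)))^-1 * intBallS d m f ys.1 ys.2)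
         @` [set ys : 'I_tau.+1 * R | 0 < ys.2 /\ rhoS d ys.1 x < ys.2]).

Definition LpnormS (R : realType) (tau : nat) (m q : R) (f : 'I_tau.+1 -> R) : R :=
  (\sum_(x : 'I_tau.+1) (`|f x| `^ q) * wtS m x) `^ (q^-1).

(* L^oo norm (every point has positive mass) *)
Definition LinfS (R : realType) (tau : nat) (f : 'I_tau.+1 -> R) : R :=
  \big[Num.max/0]_(x : 'I_tau.+1) `|f x|.

Definition admissibleS (R : realType) (tau : nat) (m : R)
  (T : ('I_tau.+1 -> R) -> ('I_tau.+1 -> R)) (p : \bar R) (C : R) : Prop :=
  match p with
  | EFin q => forall (f : 'I_tau.+1 -> R) (lam : R), 0 < lam ->
      lam * (muS m [pred x | lam < `|T f x|]) `^ (q^-1) <= C * LpnormS m q f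
  | _ => forall f : 'I_tau.+1 -> R, LinfS (T f) <= C * LinfS f
  end.

Definition best_constS (R : realType) (tau : nat) (m : R)
  (T : ('I_tau.+1 -> R) -> ('I_tau.+1 -> R)) (p : \bar R) : R :=
  inf [set C : R | 0 <= C /\ admissibleS m T p C].

Definition cc_S (R : realType) (tau : nat) (d m kappa : R) (p : \bar R) : R :=
  best_constS (tau:=tau) m (McS d m kappa) p.
Definition c_S (R : realType) (tau : nat) (d m kappa : R) (p : \bar R) : R :=
  best_constS (tau:=tau) m (MuS d m kappa) p.

Definition targetS (R : realType) (tau : nat) (d m kappa : R) (p : \bar R) : R :=
  match p with
  | EFin q => if kappa < d then Num.max 1 ((tau%:R) `^ (q^-1) * m `^ (q^-1 - 1))
              else 1
  | _ => 1
  end.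

(* Both maximal operators dominate the centred averages and are dominated by
   the averages over balls containing the point; nothing else is used.
   Lower bounds: for the indicator of x_0 the maximal function is 1 at x_0 and,
   when kappa < d, at least 1/(m+1) at every x_i, because the ball of radius
   (kappa+d)/2 about x_i is {x_i, x_0}; testing the weak estimate at heights
   1/2 and 1/(2(m+1)) gives C >= 1/2 and C >= tau^(1/p) m^(1/p-1) / 4.
   Upper bound: a ball containing x_i <> x_0 but not centred at x_i has a dilate
   covering S, so at x_i every average is at most
   |f x_i| + [kappa < d] |f x_0| / m + (mean of |f| over S), while at x_0 it is
   at most sup |f| <= ||f||_p.  Hence the level set {Mf > lam} lies in four
   pieces, each of which Chebyshev (or, for the mean, a Young-type inequality)
   bounds by a multiple of target^p ||f||_p^p / lam^p. *)
From HB Require Import structures.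
From mathcomp Require Import all_boot all_order all_algebra.
From mathcomp Require Import boolp classical_sets reals ereal exp.
From mathcomp Require Import ring lra.
Import Order.TTheory GRing.Theory Num.Theory.
Set Implicit Arguments. Unset Strict Implicit. Unset Printing Implicit Defensive.
Local Open Scope classical_set_scope.
Local Open Scope ring_scope.

Lemma ler_sum_subset (R : realType) (I : finType) (P Q : pred I) (F : I -> R) :
  (forall i, 0 <= F i) -> (forall i, P i -> Q i) ->
  \sum_(i | P i) F i <= \sum_(i | Q i) F i.
Proof.
move=> F0 PQ; rewrite [leLHS]big_mkcond [leRHS]big_mkcond /=.
by apply: ler_sum => i _; case: ifP => [/PQ ->//|_]; case: ifP.
Qed.

Lemma ler_sum_term (R : realType) (I : finType) (P : pred I) (F : I -> R) j :
  (forall i, 0 <= F i) -> P j -> F j <= \sum_(i | P i) F i.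
Proof. by move=> F0 Pj; rewrite (bigD1 j Pj) /= lerDl sumr_ge0. Qed.

Lemma sum_pred2 (R : realType) (I : finType) (a b : I) (F : I -> R) :
  a != b -> \sum_(i | (i == a) || (i == b)) F i = F a + F b.
Proof.
move=> ab; rewrite (bigD1 a) ?eqxx //= (big_pred1 b) // => i /=.
by case: (eqVneq i a) => [->|]; rewrite ?(negbTE ab) ?andbF ?andbT.
Qed.

Lemma mul_powR_le_add (R : realType) (t c q : R) :
  0 <= t -> 0 < c -> 1 <= q -> t * c `^ (q - 1) <= c `^ q + t `^ q.
Proof.
move=> t0 c0 q1.
have q0 : 0 < q by lra.
have q10 : 0 <= q - 1 by lra.
have [tc|ct] := lerP t c.
  apply: le_trans (_ : c * c `^ (q - 1) <= _).
    by rewrite ler_wpM2r ?powR_ge0.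
  by rewrite mulr_powRB1 ?lerDl ?powR_ge0 // ltW.
apply: le_trans (_ : t * t `^ (q - 1) <= _).
  by rewrite ler_wpM2l // ge0_ler_powR ?nnegrE // ltW.
by rewrite mulr_powRB1 ?lerDr ?powR_ge0 // ltW.
Qed.

Lemma powR_ge_of_mean (R : realType) (I : finType) (w g : I -> R) (c q : R) :
  (forall i, 0 <= w i) -> (forall i, 0 <= g i) -> 0 < c -> 1 <= q ->
  2 * c * \sum_i w i <= \sum_i g i * w i ->
  c `^ q * \sum_i w i <= \sum_i g i `^ q * w i.
Proof.
move=> w0 g0 c0 q1; set W := \sum_i w i => mean.
have cq : c * c `^ (q - 1) = c `^ q by rewrite mulr_powRB1 ?ltW //; lra.
have young : (\sum_i g i * w i) * c `^ (q - 1) <=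
    c `^ q * W + \sum_i g i `^ q * w i.
  rewrite mulr_suml mulr_sumr -big_split /= ler_sum // => i _.
  by rewrite mulrAC -mulrDl ler_wpM2r // mul_powR_le_add.
have := ler_wpM2r (powR_ge0 c (q - 1)) mean.
have -> : 2 * c * W * c `^ (q - 1) = 2 * (c `^ q * W).
  by rewrite -cq; ring.
lra.
Qed.

Lemma powRK (R : realType) (x q : R) : 0 <= x -> q != 0 -> (x `^ q) `^ q^-1 = x.
Proof. by move=> x0 q0; rewrite -powRrM mulfV // powRr1. Qed.

Lemma powRVK (R : realType) (x q : R) : 0 <= x -> q != 0 -> (x `^ q^-1) `^ q = x.
Proof. by move=> x0 q0; rewrite -powRrM mulVf // powRr1. Qed.

Lemma powR_mulB1 (R : realType) (a b r : R) :
  0 <= a -> 0 < b -> a `^ r * b `^ (r - 1) = (a * b) `^ r / b.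
Proof.
move=> a0 b0; rewrite powRB; last by rewrite (gt_eqF b0) implybT.
by rewrite powRr1 ?ltW // mulrA -powRM // ltW.
Qed.

Lemma powR_ge1 (R : realType) (a r : R) : 1 <= a -> 0 <= r -> 1 <= a `^ r.
Proof. by move=> a1 r0; rewrite -(powRr0 a) ler_powR. Qed.

Lemma powR_levels_le (R : realType) (q b N : R) : 1 <= q -> 1 <= b -> 0 <= N ->
  N + 3 `^ q * N + 3 `^ q * (b `^ q * N) + 3 `^ q * (2 `^ q * N)
    <= (24 * b) `^ q * N.
Proof.
move=> q1 b1 N0; have q0 : 0 <= q by lra.
have B1 : 1 <= b `^ q by exact: powR_ge1.
have C1 : 1 <= 6 `^ q by rewrite powR_ge1 ?ler1n.
have A6 : 3 `^ q <= 6 `^ q by rewrite ge0_ler_powR ?nnegrE ?ler0n ?ler_nat.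
have e6 : 3 `^ q * 2 `^ q = 6 `^ q by rewrite -powRM ?ler0n // -natrM.
have e24 : (24 * b) `^ q = 4 `^ q * (6 `^ q * b `^ q).
  have -> : 24 = 4 * 6 :> R by rewrite -natrM.
  by rewrite !powRM ?mulr_ge0 ?ler0n ?(le_trans ler01 b1) // mulrA.
have four : 4 <= 4 `^ q by rewrite le1r_powR ?ler1n.
set K := 6 `^ q * b `^ q * N.
have CB1 : 1 <= 6 `^ q * b `^ q by rewrite mulr_ege1.
have k1 : N <= K by rewrite /K ler_peMl.
have k2 : 3 `^ q * N <= K.
  by rewrite /K ler_wpM2r // (le_trans A6) // ler_peMr ?powR_ge0.
have k3 : 3 `^ q * (b `^ q * N) <= K by rewrite mulrA /K ler_wpM2r // ler_wpM2r ?powR_ge0.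
have k4 : 3 `^ q * (2 `^ q * N) <= K.
  by rewrite mulrA e6 /K ler_wpM2r // ler_peMr ?powR_ge0.
have k5 : 4 * K <= 4 `^ q * K by rewrite ler_wpM2r // /K !mulr_ge0 ?powR_ge0.
rewrite e24 -mulrA -/K; lra.
Qed.

Section StarSpace.
Variables (R : realType) (tau : nat) (d m kappa : R).
Hypotheses (d_gt1 : 1 < d) (m_ge1 : 1 <= m) (kappa_ge1 : 1 <= kappa).

Local Notation S := 'I_tau.+1.
Implicit Types (f : S -> R) (x y z : S) (T : (S -> R) -> S -> R).

Lemma wtS_ge1 x : 1 <= wtS m x.
Proof. by rewrite /wtS; case: ifP. Qed.

Lemma wtS_ge0 x : 0 <= wtS m x.
Proof. exact: le_trans ler01 (wtS_ge1 x). Qed.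

Lemma muS_ge0 (A : pred S) : 0 <= muS m A.
Proof. by apply: sumr_ge0 => x _; exact: wtS_ge0. Qed.

Lemma muS_ge_wtS (A : pred S) x : A x -> wtS m x <= muS m A.
Proof. exact/ler_sum_term/wtS_ge0. Qed.

Lemma muS_sub (A B : pred S) : (forall x, A x -> B x) -> muS m A <= muS m B.
Proof. exact/ler_sum_subset/wtS_ge0. Qed.

Lemma muS_predU (A B : pred S) : muS m (predU A B) <= muS m A + muS m B.
Proof.
rewrite /muS [leLHS]big_mkcond [X in _ <= X + _]big_mkcond.
rewrite [X in _ <= _ + X]big_mkcond -big_split /= ler_sum // => x _.
by case: (A x); case: (B x); rewrite /= ?addr0 ?add0r ?lerDl ?wtS_ge0.
Qed.

Lemma muS_predT : muS m (@predT S) = 1 + tau%:R * m.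
Proof.
rewrite /muS big_ord_recl /wtS eqxx; congr (_ + _).
by rewrite (eq_bigr (fun=> m)) // sumr_const card_ord mulr_natl.
Qed.

Lemma muS_nz : muS m [pred x : S | x != ord0] = tau%:R * m.
Proof.
by apply: (addrI 1); rewrite -muS_predT [in RHS]/muS (bigD1 ord0) //= /wtS eqxx.
Qed.

Lemma muS_predT_gt0 : 0 < muS m (@predT S).
Proof.
have : 0 <= tau%:R * m by rewrite mulr_ge0 ?ler0n //; move: m_ge1; lra.
by rewrite muS_predT; lra.
Qed.

Lemma rhoS_xx x : rhoS d x x = 0.
Proof. by rewrite /rhoS eqxx. Qed.

Lemma rhoS_le_d x y : rhoS d x y <= d.
Proof. by move: d_gt1; rewrite /rhoS; case: ifP => _; [|case: ifP => _]; lra. Qed.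

Lemma rhoS_nz0 x : x != ord0 -> rhoS d x ord0 = 1.
Proof. by rewrite /rhoS => /negbTE ->; rewrite eqxx orbT. Qed.

Lemma rhoS_nz x y : x != y -> x != ord0 -> y != ord0 -> rhoS d x y = d.
Proof. by rewrite /rhoS => /negbTE -> /negbTE -> /negbTE ->. Qed.

Lemma rhoS_le_nz x y z : x != ord0 -> y != x -> rhoS d y z <= rhoS d y x.
Proof.
move=> x0 yx; case: (eqVneq y ord0) => [->|y0].
  rewrite /rhoS [ord0 == x]eq_sym (negbTE x0) /=.
  by case: ifP => _; rewrite ?ler01.
by rewrite (rhoS_nz yx) // rhoS_le_d.
Qed.

Lemma ltr_rhoS_nz x z s : x != ord0 -> s <= d -> rhoS d x z < s ->
  z = x \/ (z = ord0 /\ 1 < s).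
Proof.
move=> x0 sd; case: (eqVneq z x) => [->|zx]; first by left.
case: (eqVneq z ord0) => [->|z0]; first by rewrite rhoS_nz0 // => s1; right.
have xz : x != z by rewrite eq_sym.
by rewrite (rhoS_nz xz x0 z0) => /lt_le_trans/(_ sd); rewrite ltxx.
Qed.

Let kappa_gt0 : 0 < kappa. Proof. exact: lt_le_trans ltr01 kappa_ge1. Qed.

Lemma ler_kappa_mul s : 0 <= s -> s <= kappa * s.
Proof. by move=> s0; rewrite ler_peMl. Qed.

Definition avgS f y s : R :=
  (muS m (ballS d y (kappa * s)))^-1 * intBallS d m f y s.

Definition meanS f : R := (\sum_x `|f x| * wtS m x) / muS m (@predT S).

Definition hubS f : R := if kappa < d then `|f ord0| / m else 0.

Lemma meanS_ge0 f : 0 <= meanS f.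
Proof.
apply: divr_ge0; last exact/ltW/muS_predT_gt0.
by apply: sumr_ge0 => x _; rewrite mulr_ge0 ?wtS_ge0.
Qed.

Lemma hubS_ge0 f : 0 <= hubS f.
Proof. by rewrite /hubS; case: ifP => // _; rewrite divr_ge0 //; move: m_ge1; lra. Qed.

Lemma muS_ball_gt0 y r : 0 < r -> 0 < muS m (ballS d y r).
Proof.
move=> r0; apply: lt_le_trans (lt_le_trans ltr01 (wtS_ge1 y)) (muS_ge_wtS _).
by rewrite /ballS /= rhoS_xx.
Qed.

Lemma intBallS_ge0 f y s : 0 <= intBallS d m f y s.
Proof. by apply: sumr_ge0 => z _; rewrite mulr_ge0 ?wtS_ge0. Qed.

Lemma avgS_ge0 f y s : 0 < s -> 0 <= avgS f y s.
Proof.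
by move=> s0; rewrite mulr_ge0 ?intBallS_ge0 // invr_ge0 ltW // muS_ball_gt0 ?mulr_gt0.
Qed.

Lemma avgS_le f y s M : 0 < s -> (forall z, `|f z| <= M) -> avgS f y s <= M.
Proof.
move=> s0 fM; have M0 : 0 <= M := le_trans (normr_ge0 _) (fM y).
rewrite /avgS mulrC ler_pdivrMr ?muS_ball_gt0 ?mulr_gt0 //.
apply: le_trans (_ : \sum_(z | rhoS d y z < s) M * wtS m z <= _).
  by apply: ler_sum => z _; rewrite ler_wpM2r ?wtS_ge0.
rewrite -mulr_sumr ler_wpM2l //.
apply: (muS_sub (A := ballS d y s)) => z /= /lt_le_trans; apply.
exact/ler_kappa_mul/ltW.
Qed.

Lemma avgS_le_mean f y s : 0 < s -> (forall z, rhoS d y z < kappa * s) ->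
  avgS f y s <= meanS f.
Proof.
move=> s0 full; rewrite /avgS /meanS.
have -> : muS m (ballS d y (kappa * s)) = muS m (@predT S).
  by apply: eq_bigl => z; rewrite /ballS /= full.
rewrite mulrC ler_pM2r ?invr_gt0 ?muS_predT_gt0 //.
by apply: ler_sum_subset => // z; rewrite mulr_ge0 ?wtS_ge0.
Qed.

Lemma intBallS_nz_le f x s : x != ord0 -> s <= d ->
  intBallS d m f x s <= `|f x| * m + (if 1 < s then `|f ord0| else 0).
Proof.
move=> x0 sd; have F0 z : 0 <= `|f z| * wtS m z by rewrite mulr_ge0 ?wtS_ge0.
rewrite /intBallS; case: ifP => s1.
  apply: le_trans (_ : \sum_(z | (z == x) || (z == ord0)) `|f z| * wtS m z <= _).
    apply: ler_sum_subset => // z /(ltr_rhoS_nz x0 sd) [->|[-> _]].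
      by rewrite eqxx.
    by rewrite eqxx orbT.
  by rewrite sum_pred2 // /wtS (negbTE x0) eqxx mulr1.
apply: le_trans (_ : \sum_(z | z == x) `|f z| * wtS m z <= _).
  apply: ler_sum_subset => // z /(ltr_rhoS_nz x0 sd) [->|[_ s1']].
    by rewrite eqxx.
  by rewrite s1' in s1.
by rewrite big_pred1_eq /wtS (negbTE x0) addr0.
Qed.

Lemma avgS_center_le f x s : x != ord0 -> 0 < s ->
  ~ (forall z, rhoS d x z < kappa * s) -> avgS f x s <= `|f x| + hubS f.
Proof.
move=> x0 s0 /existsNP[z /negP]; rewrite -leNgt => ksz.
have ksd : kappa * s <= d := le_trans ksz (rhoS_le_d x z).
have sd : s <= d := le_trans (ler_kappa_mul (ltW s0)) ksd.
have m0 : 0 < m by move: m_ge1; lra.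
have muB : m <= muS m (ballS d x (kappa * s)).
  apply: le_trans (muS_ge_wtS (x := x) _); first by rewrite /wtS (negbTE x0).
  by rewrite /ballS /= rhoS_xx mulr_gt0.
rewrite /avgS mulrC ler_pdivrMr ?muS_ball_gt0 ?mulr_gt0 //.
apply: le_trans (intBallS_nz_le f x0 sd) _.
apply: le_trans (_ : (`|f x| + hubS f) * m <= _); last first.
  by rewrite ler_wpM2l // addr_ge0 ?hubS_ge0.
rewrite mulrDl lerD2l /hubS; case: ifP => s1; last first.
  by case: ifP => _ //; rewrite mulr_ge0 ?divr_ge0 // ltW.
have kd : kappa < d.
  by apply: lt_le_trans ksd; rewrite ltr_pMr.
by rewrite kd divfK ?gt_eqF.
Qed.

Lemma avgS_nz_le f x y s : x != ord0 -> 0 < s -> rhoS d y x < s ->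
  avgS f y s <= `|f x| + hubS f + meanS f.
Proof.
move=> x0 s0 yxs; have h0 := hubS_ge0 f; have m0 := meanS_ge0 f.
have [full|notfull] := pselect (forall z, rhoS d y z < kappa * s).
  by have := avgS_le_mean f s0 full; have := normr_ge0 (f x); lra.
case: (eqVneq y x) notfull => [-> notfull|yx []].
  by have := avgS_center_le f x0 s0 notfull; lra.
(* For y <> x the point x is farthest from y, so B(y, kappa s) is all of S. *)
move=> z; apply: le_lt_trans (rhoS_le_nz z x0 yx) _.
exact/(lt_le_trans yxs)/ler_kappa_mul/ltW.
Qed.

Lemma normr_le_LinfS f z : `|f z| <= LinfS f.
Proof. exact: le_bigmax. Qed.

Record maximal_opS (T : (S -> R) -> S -> R) : Prop := MaximalOpS {
  maximal_opS_le : forall f x B,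
    (forall y s, 0 < s -> rhoS d y x < s -> avgS f y s <= B) -> T f x <= B;
  maximal_opS_ge : forall f x s, 0 < s -> avgS f x s <= T f x }.

Lemma maximal_opS_ge0 T f x : maximal_opS T -> 0 <= T f x.
Proof. by case=> _ Tge; apply: le_trans (Tge f x 1 ltr01); exact: avgS_ge0. Qed.

Lemma maximal_opS_McS : maximal_opS (McS d m kappa).
Proof.
split=> [f x B avgB | f x s s0].
  apply: ge_sup; first by exists (avgS f x 1), 1 => //; rewrite /= ltr01.
  by move=> _ [s /= s0 <-]; apply: avgB; rewrite ?rhoS_xx.
apply: ub_le_sup; last by exists s.
by exists (LinfS f) => _ [t /= t0 <-]; apply: avgS_le => // z; exact: normr_le_LinfS.
Qed.

Lemma maximal_opS_MuS : maximal_opS (MuS d m kappa).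
Proof.
split=> [f x B avgB | f x s s0].
  apply: ge_sup; first by exists (avgS f x 1), (x, 1) => //=; rewrite rhoS_xx ltr01.
  by move=> _ [[y s] /= [s0 yx] <-]; exact: avgB.
apply: ub_le_sup; last by exists (x, s) => //=; rewrite rhoS_xx.
exists (LinfS f) => _ [[y t] /= [t0 _] <-].
by apply: avgS_le => // z; exact: normr_le_LinfS.
Qed.

Definition deltaS : S -> R := fun z => (z == ord0)%:R.

Lemma normr_deltaS z : `|deltaS z| = deltaS z.
Proof. by rewrite ger0_norm ?ler0n. Qed.

Lemma LpnormS_deltaS q : 0 < q -> LpnormS m q deltaS = 1.
Proof.
move=> q0; rewrite /LpnormS (bigD1 ord0) //= big1 ?addr0.
  by rewrite normr_deltaS /deltaS eqxx powR1 /wtS eqxx mulr1 powR1.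
by move=> z /negbTE z0; rewrite normr_deltaS /deltaS z0 powR0 ?mul0r // gt_eqF.
Qed.

Lemma LinfS_deltaS : LinfS deltaS = 1.
Proof.
apply/eqP; rewrite eq_le (le_trans _ (normr_le_LinfS _ ord0)); last first.
  by rewrite normr_deltaS /deltaS eqxx.
by rewrite andbT; apply: bigmax_le => // z _; rewrite normr_deltaS /deltaS; case: eqP.
Qed.

Lemma avgS_deltaS_0 : avgS deltaS ord0 kappa^-1 = 1.
Proof.
have kk : kappa * kappa^-1 = 1 by rewrite mulfV // gt_eqF.
have ball1 : ballS d (ord0 : S) (kappa * kappa^-1) =1 pred1 ord0.
  move=> z; rewrite /ballS /= kk /rhoS eqxx orTb [ord0 == z]eq_sym.
  by case: (z == ord0); rewrite ?ltr01 ?ltxx.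
rewrite /avgS /muS (eq_bigl _ _ ball1) big_pred1_eq /wtS eqxx invr1 mul1r.
rewrite /intBallS (bigD1 ord0) /= ?rhoS_xx ?invr_gt0 // big1 => [|z /andP[_ /negbTE z0]].
  by rewrite normr_deltaS /deltaS eqxx mulr1 addr0.
by rewrite normr_deltaS /deltaS z0 mul0r.
Qed.

Lemma avgS_deltaS_nz x : kappa < d -> x != ord0 ->
  (m + 1)^-1 <= avgS deltaS x ((kappa + d) / 2 / kappa).
Proof.
move=> kd x0; set c := (kappa + d) / 2.
have kc : kappa * (c / kappa) = c by rewrite mulrC divfK ?gt_eqF.
have c1 : 1 < c / kappa by rewrite ltr_pdivlMr // mul1r /c; lra.
have cd : c <= d by rewrite /c; lra.
have muB : muS m (ballS d x (kappa * (c / kappa))) <= m + 1.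
  rewrite kc (le_trans (muS_sub (B := [pred z | (z == x) || (z == ord0)]) _)) //.
    by move=> z /(ltr_rhoS_nz x0 cd) [->|[-> _]]; rewrite /= eqxx ?orbT.
  by rewrite /muS sum_pred2 // /wtS eqxx (negbTE x0).
have intB : 1 <= intBallS d m deltaS x (c / kappa).
  apply: le_trans (ler_sum_term (j := ord0) _ _); last by rewrite rhoS_nz0.
    by rewrite normr_deltaS /deltaS /wtS eqxx mulr1.
  by move=> z; rewrite mulr_ge0 ?wtS_ge0.
have mu0 : 0 < muS m (ballS d x (kappa * (c / kappa))).
  by rewrite kc muS_ball_gt0 // /c; move: kappa_ge1; lra.
rewrite /avgS -[leLHS]mulr1 ler_pM ?ler01 ?invr_ge0 //; first by move: m_ge1; lra.
by rewrite lef_pV2 ?posrE //; move: m_ge1; lra.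
Qed.

Lemma maximal_opS_deltaS_0 T : maximal_opS T -> 1 <= T deltaS ord0.
Proof. by move=> MT; rewrite -avgS_deltaS_0 maximal_opS_ge // invr_gt0. Qed.

Lemma maximal_opS_deltaS_nz T x : maximal_opS T -> kappa < d -> x != ord0 ->
  (m + 1)^-1 <= T deltaS x.
Proof.
move=> MT kd x0; apply: le_trans (avgS_deltaS_nz kd x0) (maximal_opS_ge MT _ _ _).
by rewrite !divr_gt0 //; move: kappa_ge1 kd; lra.
Qed.

Lemma admissibleS_inf_ge1 T C : maximal_opS T -> admissibleS m T +oo%E C -> 1 <= C.
Proof.
move=> MT /= /(_ deltaS); rewrite LinfS_deltaS mulr1; apply: le_trans.
apply: le_trans (normr_le_LinfS _ ord0).
by rewrite ger0_norm ?(maximal_opS_ge0 _ _ MT) // maximal_opS_deltaS_0.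
Qed.

Lemma admissibleS_q_ge_half T q C : maximal_opS T -> 0 < q ->
  admissibleS m T q%:E C -> 2^-1 <= C.
Proof.
move=> MT q0 /= /(_ deltaS 2^-1); rewrite LpnormS_deltaS // mulr1 invr_gt0 ltr0n.
move=> /(_ isT); apply: le_trans; rewrite ler_peMr ?invr_ge0 ?ler0n //.
apply: le_trans (_ : 1 `^ q^-1 <= _); first by rewrite powR1.
have qi0 : 0 <= q^-1 by rewrite invr_ge0 ltW.
rewrite ge0_ler_powR ?nnegrE ?muS_ge0 ?ler01 //.
apply: le_trans (wtS_ge1 ord0) (muS_ge_wtS _) => /=.
rewrite ger0_norm ?(maximal_opS_ge0 _ _ MT) //.
by apply: lt_le_trans (maximal_opS_deltaS_0 MT); rewrite invf_lt1 ?ltr1n.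
Qed.

Lemma admissibleS_q_ge_tau T q C : maximal_opS T -> 0 < q -> kappa < d ->
  admissibleS m T q%:E C -> (tau%:R * m) `^ q^-1 <= C * (2 * (m + 1)).
Proof.
move=> MT q0 kd /= /(_ deltaS (2 * (m + 1))^-1); rewrite LpnormS_deltaS // mulr1.
have m2 : 0 < 2 * (m + 1) by move: m_ge1; lra.
rewrite invr_gt0 m2 mulrC ler_pdivrMr // => /(_ isT); apply: le_trans.
have qi0 : 0 <= q^-1 by rewrite invr_ge0 ltW.
rewrite ge0_ler_powR ?nnegrE ?muS_ge0 ?mulr_ge0 ?ler0n //; first by move: m_ge1; lra.
rewrite -muS_nz; apply: muS_sub => x x0 /=; rewrite ger0_norm ?(maximal_opS_ge0 _ _ MT) //.
apply: lt_le_trans (maximal_opS_deltaS_nz MT kd x0).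
by rewrite ltf_pV2 ?posrE; move: m_ge1; lra.
Qed.

Lemma targetS_ge1 p : 1 <= targetS tau d m kappa p.
Proof. by case: p => [q| |] //=; case: ifP => _ //; rewrite le_max lexx. Qed.

Lemma targetS_ltE q : kappa < d ->
  targetS tau d m kappa q%:E = Num.max 1 ((tau%:R * m) `^ q^-1 / m).
Proof. by move=> kd; rewrite /targetS kd powR_mulB1 ?ler0n //; move: m_ge1; lra. Qed.

Lemma admissibleS_q_ge T q C : maximal_opS T -> 0 < q -> admissibleS m T q%:E C ->
  4^-1 * targetS tau d m kappa q%:E <= C.
Proof.
move=> MT q0 adm; have half := admissibleS_q_ge_half MT q0 adm.
rewrite mulrC ler_pdivrMr ?ltr0n //.
case: (ltP kappa d) => [kd|]; last by rewrite /targetS ltNge => -> /=; lra.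
rewrite targetS_ltE // ge_max; apply/andP; split; first lra.
have m0 : 0 < m by move: m_ge1; lra.
rewrite ler_pdivrMr //; apply: le_trans (admissibleS_q_ge_tau MT q0 kd adm) _.
by move: m_ge1; nra.
Qed.

Lemma admissibleS_inf_1 T : maximal_opS T -> admissibleS m T +oo%E 1.
Proof.
move=> MT f /=; rewrite mul1r; apply: bigmax_le => [|x _].
  exact: le_trans (normr_ge0 _) (normr_le_LinfS f ord0).
rewrite ger0_norm ?(maximal_opS_ge0 _ _ MT) //.
apply: (maximal_opS_le MT) => y s s0 _; exact: avgS_le s0 (normr_le_LinfS f).
Qed.

Definition LppowS q f : R := \sum_x `|f x| `^ q * wtS m x.

Lemma LppowS_ge0 q f : 0 <= LppowS q f.
Proof. by apply: sumr_ge0 => x _; rewrite mulr_ge0 ?powR_ge0 ?wtS_ge0. Qed.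

Lemma normr_powR_le_LppowS q f z : `|f z| `^ q <= LppowS q f.
Proof.
apply: le_trans (_ : `|f z| `^ q * wtS m z <= _).
  by rewrite ler_peMr ?powR_ge0 ?wtS_ge1.
by apply: ler_sum_term => // x; rewrite mulr_ge0 ?powR_ge0 ?wtS_ge0.
Qed.

Lemma normr_le_LpnormS q f z : 0 < q -> `|f z| <= LpnormS m q f.
Proof.
move=> q0; rewrite -(powRK (normr_ge0 (f z)) (negbT (gt_eqF q0))).
have qi0 : 0 <= q^-1 by rewrite invr_ge0 ltW.
by apply: ge0_ler_powR (normr_powR_le_LppowS _ _ _); rewrite ?nnegrE ?powR_ge0 ?LppowS_ge0.
Qed.

Lemma maximal_opS_levelset T f q lam x : maximal_opS T -> 0 < q -> lam < `|T f x| ->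
  [|| (x == ord0) && (lam < LpnormS m q f), lam / 3 < `|f x|,
      (x != ord0) && (lam / 3 < hubS f) | lam / 3 < meanS f].
Proof.
move=> MT q0; rewrite ger0_norm ?(maximal_opS_ge0 _ _ MT) // => lamT.
case: (eqVneq x ord0) lamT => [-> lamT|x0 lamT] /=.
  apply/orP; left; apply: lt_le_trans lamT _; apply: (maximal_opS_le MT) => y s s0 _.
  by apply: avgS_le => // z; exact: normr_le_LpnormS.
have : T f x <= `|f x| + hubS f + meanS f.
  by apply: (maximal_opS_le MT) => y s s0; exact: avgS_nz_le.
by case: ltP => //= h1; case: ltP => //= h2; case: ltP => //= h3; lra.
Qed.

Lemma muS_levelset_le f q t : 0 < q -> 0 <= t ->
  t `^ q * muS m [pred x | t < `|f x|] <= LppowS q f.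
Proof.
move=> q0 t0; rewrite /muS /LppowS mulr_sumr.
apply: le_trans (_ : \sum_(x | t < `|f x|) `|f x| `^ q * wtS m x <= _).
  apply: ler_sum => x tx; rewrite ler_wpM2r ?wtS_ge0 //.
  by rewrite ge0_ler_powR ?nnegrE ?(ltW q0) ?(ltW tx).
by apply: ler_sum_subset => // x; rewrite mulr_ge0 ?powR_ge0 ?wtS_ge0.
Qed.

Lemma muS_origin_le f q lam : 0 < q -> 0 <= lam ->
  lam `^ q * muS m [pred x : S | (x == ord0) && (lam < LpnormS m q f)] <= LppowS q f.
Proof.
move=> q0 lam0; case: (ltP lam (LpnormS m q f)) => [lamN|Nlam]; last first.
  by rewrite /muS big_pred0 ?mulr0 ?LppowS_ge0 // => x /=; rewrite andbF.
rewrite /muS (big_pred1 ord0) => [|x]; last by rewrite /= andbT.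
rewrite /wtS eqxx mulr1 -(powRVK (LppowS_ge0 q f) (negbT (gt_eqF q0))).
by apply: ge0_ler_powR (ltW lamN); rewrite ?nnegrE ?powR_ge0 // ltW.
Qed.

Lemma muS_hub_le f q t : 0 < q -> 0 <= t ->
  t `^ q * muS m [pred x : S | (x != ord0) && (t < hubS f)]
    <= targetS tau d m kappa q%:E `^ q * LppowS q f.
Proof.
move=> q0 t0; have m0 : 0 < m by move: m_ge1; lra.
have [th|_] := ltP t (hubS f); last first.
  rewrite /muS big_pred0 ?mulr0 ?mulr_ge0 ?powR_ge0 ?LppowS_ge0 // => x /=.
  by rewrite andbF.
have kd : kappa < d by move: th; rewrite /hubS; case: ifP => // _; rewrite ltNge t0.
move: th; rewrite /hubS kd ltr_pdivlMr // => /ltW tm.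
have -> : muS m [pred x : S | (x != ord0) && true] = tau%:R * m.
  by rewrite -muS_nz; apply: eq_bigl => x; rewrite /= andbT.
set targ := targetS tau d m kappa q%:E.
have targ0 : 0 <= targ := le_trans ler01 (targetS_ge1 _).
have tau_m : tau%:R * m <= (targ * m) `^ q.
  have tm0 : 0 <= tau%:R * m by rewrite mulr_ge0 ?ler0n ?ltW.
  rewrite -[leLHS](powRVK tm0 (negbT (gt_eqF q0))).
  apply: ge0_ler_powR; rewrite ?nnegrE ?powR_ge0 ?mulr_ge0 ?(ltW q0) ?(ltW m0) //.
  by rewrite -ler_pdivrMr // /targ targetS_ltE // le_max lexx orbT.
apply: le_trans (_ : t `^ q * (targ * m) `^ q <= _); first by rewrite ler_wpM2l ?powR_ge0.
rewrite -powRM ?mulr_ge0 ?(ltW m0) //.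
apply: le_trans (_ : (targ * `|f ord0|) `^ q <= _).
  apply: ge0_ler_powR; rewrite ?nnegrE ?mulr_ge0 ?(ltW q0) ?(ltW m0) //.
  by rewrite mulrCA ler_wpM2l.
by rewrite powRM // ler_wpM2l ?powR_ge0 ?normr_powR_le_LppowS.
Qed.

Lemma muS_mean_le f q t : 1 <= q -> 0 < t ->
  t `^ q * muS m [pred x : S | t < meanS f] <= 2 `^ q * LppowS q f.
Proof.
move=> q1 t0; have [tM|_] := ltP t (meanS f); last first.
  by rewrite /muS big_pred0 ?mulr0 ?mulr_ge0 ?powR_ge0 ?LppowS_ge0.
have c0 : 0 < t / 2 by rewrite divr_gt0.
have mean : 2 * (t / 2) * \sum_(x : S) wtS m x <= \sum_x `|f x| * wtS m x.
  have -> : 2 * (t / 2) = t by rewrite mulrC divfK.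
  by move: tM; rewrite /meanS ltr_pdivlMr ?muS_predT_gt0 // => /ltW.
have := powR_ge_of_mean wtS_ge0 (fun x => normr_ge0 (f x)) c0 q1 mean.
have -> : t `^ q = 2 `^ q * (t / 2) `^ q.
  by rewrite -powRM ?ler0n ?ltW // mulrC divfK ?pnatr_eq0.
by rewrite -mulrA => h; rewrite ler_wpM2l ?powR_ge0.
Qed.

Lemma maximal_opS_weak T f q lam : maximal_opS T -> 1 <= q -> 0 < lam ->
  lam `^ q * muS m [pred x | lam < `|T f x|]
    <= (24 * targetS tau d m kappa q%:E) `^ q * LppowS q f.
Proof.
move=> MT q1 lam0; have q0 : 0 < q by lra.
set t := lam / 3; have t0 : 0 < t by rewrite divr_gt0.
set E0 := [pred x : S | (x == ord0) && (lam < LpnormS m q f)].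
set E1 := [pred x : S | t < `|f x|].
set E2 := [pred x : S | (x != ord0) && (t < hubS f)].
set E3 := [pred x : S | t < meanS f].
have cover : muS m [pred x | lam < `|T f x|]
    <= muS m E0 + (muS m E1 + (muS m E2 + muS m E3)).
  apply: le_trans (muS_sub (B := predU E0 (predU E1 (predU E2 E3))) _) _.
    by move=> x /(maximal_opS_levelset MT q0).
  apply: le_trans (muS_predU _ _) _; rewrite lerD2l.
  by apply: le_trans (muS_predU _ _) _; rewrite lerD2l muS_predU.
have lamq : lam `^ q = 3 `^ q * t `^ q.
  by rewrite -powRM ?ler0n ?ltW // mulrC divfK.
have b0 := muS_origin_le f q0 (ltW lam0).
have b1 := ler_wpM2l (powR_ge0 3 q) (muS_levelset_le f q0 (ltW t0)).
have b2 := ler_wpM2l (powR_ge0 3 q) (muS_hub_le f q0 (ltW t0)).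
have b3 := ler_wpM2l (powR_ge0 3 q) (muS_mean_le f q1 t0).
apply: le_trans (ler_wpM2l (powR_ge0 lam q) cover) _.
apply: le_trans (powR_levels_le q1 (targetS_ge1 _) (LppowS_ge0 q f)).
move: b0 b1 b2 b3; rewrite -/E0 -/E1 -/E2 -/E3 !lamq -!mulrA; lra.
Qed.

Lemma admissibleS_q T q : maximal_opS T -> 1 <= q ->
  admissibleS m T q%:E (24 * targetS tau d m kappa q%:E).
Proof.
move=> MT q1 f lam lam0; have q0 : 0 < q by lra.
have qn0 : q != 0 := negbT (gt_eqF q0).
have c0 : 0 <= 24 * targetS tau d m kappa q%:E.
  by rewrite mulr_ge0 // (le_trans ler01 (targetS_ge1 _)).
rewrite /LpnormS -/(LppowS q f) -{1}(powRK (ltW lam0) qn0) -[24 * _](powRK c0 qn0).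
rewrite -!powRM ?powR_ge0 ?LppowS_ge0 ?muS_ge0 //.
apply: ge0_ler_powR; last exact: maximal_opS_weak.
- by rewrite invr_ge0 ltW.
- by rewrite nnegrE mulr_ge0 ?powR_ge0 ?muS_ge0.
- by rewrite nnegrE mulr_ge0 ?powR_ge0 ?LppowS_ge0.
Qed.

Lemma best_constS_bounds T p c1 c2 : 0 <= c2 -> admissibleS m T p c2 ->
  (forall C, 0 <= C -> admissibleS m T p C -> c1 <= C) ->
  c1 <= best_constS m T p <= c2.
Proof.
move=> c20 adm2 low; apply/andP; split.
  by apply: lb_le_inf; [exists c2 | move=> C [C0 aC]; exact: low].
by apply: ge_inf; [exists 0 => C [] | split].
Qed.

Lemma best_constS_maximal_opS T p : maximal_opS T -> (1 <= p)%E ->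
  4^-1 * targetS tau d m kappa p <= best_constS m T p
    <= 24 * targetS tau d m kappa p.
Proof.
move=> MT; case: p => [q| |] //=; last first.
  move=> _; rewrite /targetS !mulr1.
  have /andP[lo hi] := best_constS_bounds ler01 (admissibleS_inf_1 MT)
    (fun C _ => admissibleS_inf_ge1 MT).
  by apply/andP; split; [apply: le_trans lo; rewrite invf_le1 ?ler1n | lra].
rewrite lee_fin => q1; have q0 : 0 < q by lra.
apply: best_constS_bounds (admissibleS_q MT q1) _.
  by rewrite mulr_ge0 // (le_trans ler01 (targetS_ge1 _)).
by move=> C _; exact: admissibleS_q_ge MT q0.
Qed.

End StarSpace.

Unset Implicit Arguments.

Theorem lemma3p3p2 (R : realType) (p : \bar R) :
  (1%E <= p)%E ->
  exists c1 c2 : R, 0 < c1 /\ 0 < c2 /\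
    forall (tau : nat) (d m kappa : R),
      (0 < tau)%N -> 1 < d <= 2 -> 1 <= m -> 1 <= kappa ->
      (c1 * targetS tau d m kappa p <= c_S tau d m kappa p <= c2 * targetS tau d m kappa p)
      /\ (c1 * targetS tau d m kappa p <= cc_S tau d m kappa p
          <= c2 * targetS tau d m kappa p).
Proof.
move=> p1; exists 4^-1, 24; split; first by rewrite invr_gt0 ltr0n.
split=> // tau d m kappa _ /andP[d1 _] m1 k1.
split; apply: best_constS_maximal_opS => //.
  exact: maximal_opS_MuS.
exact: maximal_opS_McS.
Qed.
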